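(* Let $U$ be an open subset of $\mathbb{R}^2$ and $I,J$ two real intervals. Let $u:U\times J\to I$ be a $C^1$ function such that $u(\cdot,\cdot\,;s)$ is harmonic for every $s\in J$, and such that there exists a $C^1$ function $t:U\times I\to J$ with $u(x,y;t(x,y;z))=z$ for all $(x,y,z)\in U\times I$. Define on $U\times I$ the vector field $$\phi(x,y,z):=\big(2\nabla u(x,y;t(x,y;z)),\ |\nabla u(x,y;t(x,y;z))|^2\big),$$ where $\nabla u(x,y;t(x,y;z))$ denotes the gradient of $u$ with respect to $(x,y)$ evaluated at $(x,y;t(x,y;z))$. Then $\phi$ is divergence free in $U\times I$. *)

From Stdlib Require Import Reals.
From Coquelicot Require Import Coquelicot.
Open Scope R_scope.

Definition open_ivl (a b : Rbar) (z : R) : Prop :=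
  Rbar_lt a z /\ Rbar_lt z b.

Definition open2 (U : R -> R -> Prop) : Prop :=
  open (fun p : R * R => U (fst p) (snd p)).

Definition pdx (f : R -> R -> R -> R) (x y z : R) : R := Derive (fun x' => f x' y z) x.
Definition pdy (f : R -> R -> R -> R) (x y z : R) : R := Derive (fun y' => f x y' z) y.
Definition pdz (f : R -> R -> R -> R) (x y z : R) : R := Derive (fun z' => f x y z') z.

Definition uncurry3 (g : R -> R -> R -> R) : R * R * R -> R :=
  fun p => g (fst (fst p)) (snd (fst p)) (snd p).

Definition C1_on3 (f : R -> R -> R -> R) (D : R -> R -> R -> Prop) : Prop :=
  forall x y z, D x y z ->
    ex_derive (fun x' => f x' y z) x /\
    ex_derive (fun y' => f x y' z) y /\
    ex_derive (fun z' => f x y z') z /\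
    continuous (uncurry3 f) (x, y, z) /\
    continuous (uncurry3 (pdx f)) (x, y, z) /\
    continuous (uncurry3 (pdy f)) (x, y, z) /\
    continuous (uncurry3 (pdz f)) (x, y, z).

Definition dx (g : R -> R -> R) (x y : R) : R := Derive (fun x' => g x' y) x.
Definition dy (g : R -> R -> R) (x y : R) : R := Derive (fun y' => g x y') y.

Definition uncurry2 (g : R -> R -> R) : R * R -> R := fun p => g (fst p) (snd p).

Definition C2_on2 (g : R -> R -> R) (U : R -> R -> Prop) : Prop :=
  forall x y, U x y ->
    ex_derive (fun x' => g x' y) x /\ ex_derive (fun y' => g x y') y /\
    ex_derive (fun x' => dx g x' y) x /\ ex_derive (fun y' => dx g x y') y /\
    ex_derive (fun x' => dy g x' y) x /\ ex_derive (fun y' => dy g x y') y /\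
    continuous (uncurry2 g) (x, y) /\
    continuous (uncurry2 (dx g)) (x, y) /\
    continuous (uncurry2 (dy g)) (x, y) /\
    continuous (uncurry2 (dx (dx g))) (x, y) /\
    continuous (uncurry2 (dy (dx g))) (x, y) /\
    continuous (uncurry2 (dx (dy g))) (x, y) /\
    continuous (uncurry2 (dy (dy g))) (x, y).

Definition harmonic_on (g : R -> R -> R) (U : R -> R -> Prop) : Prop :=
  C2_on2 g U /\ forall x y, U x y -> dx (dx g) x y + dy (dy g) x y = 0.

Definition divergence_free_on (P Q S : R -> R -> R -> R) (D : R -> R -> R -> Prop) : Prop :=
  forall x y z, D x y z ->
    ex_derive (fun x' => P x' y z) x /\
    ex_derive (fun y' => Q x y' z) y /\
    ex_derive (fun z' => S x y z') z /\
    pdx P x y z + pdy Q x y z + pdz S x y z = 0.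

(* The divergence of phi involves x- and y-derivatives of grad u(x, y; t(x, y; z)),
   hence mixed derivatives of u in (x, y) and s that are not assumed to exist.
   Harmonicity removes them: if g is harmonic near a closed disk of radius r around
   (a, b), then
     dg/dx (a, b) = (pi r)^-1 \int_0^{2 pi} g (a + r cos th, b + r sin th) cos th dth,
   and likewise dg/dy with sin th, because the first Fourier coefficient F(s) of g on
   the circle of radius s solves the Euler equation s^2 F'' + s F' - F = 0, so that
   F is linear in s.  With these formulas, grad u(.; s) only enters through values of
   u, which can be differentiated under the integral sign.  The s-derivatives of u
   then cancel by implicit differentiation of u(x, y; t(x, y; z)) = z, and the
   divergence reduces to 2 (pi r)^-1 times the integral over the circle of the radial
   derivative of u(.; t(x, y; z)), which vanishes by the mean value property. *)

From Stdlib Require Import Reals Lra.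
From Coquelicot Require Import Coquelicot.
Open Scope R_scope.

Lemma continuous_Rplus {T : UniformSpace} (f h : T -> R) p :
  continuous f p -> continuous h p -> continuous (fun q => f q + h q) p.
Proof. apply (continuous_plus f h). Qed.

Lemma continuous_Rmult {T : UniformSpace} (f h : T -> R) p :
  continuous f p -> continuous h p -> continuous (fun q => f q * h q) p.
Proof. apply (continuous_mult f h). Qed.

Lemma continuous_Ropp {T : UniformSpace} (f : T -> R) p :
  continuous f p -> continuous (fun q => - f q) p.
Proof. apply (continuous_opp f). Qed.

Lemma continuous_Rminus {T : UniformSpace} (f h : T -> R) p :
  continuous f p -> continuous h p -> continuous (fun q => f q - h q) p.
Proof. intros Hf Hh; apply continuous_Rplus; [exact Hf | apply continuous_Ropp, Hh]. Qed.

Lemma continuous_Rcos {T : UniformSpace} (f : T -> R) p :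
  continuous f p -> continuous (fun q => cos (f q)) p.
Proof. intros Hf; apply (continuous_comp f cos); [exact Hf | apply continuous_cos]. Qed.

Lemma continuous_Rsin {T : UniformSpace} (f : T -> R) p :
  continuous f p -> continuous (fun q => sin (f q)) p.
Proof. intros Hf; apply (continuous_comp f sin); [exact Hf | apply continuous_sin]. Qed.

Lemma continuous_comp3 {T : UniformSpace} (f : R -> R -> R -> R) (X Y Z : T -> R) p :
  continuous X p -> continuous Y p -> continuous Z p ->
  continuous (uncurry3 f) (X p, Y p, Z p) ->
  continuous (fun q => f (X q) (Y q) (Z q)) p.
Proof.
  intros HX HY HZ Hf.
  apply (continuous_comp (fun q => (X q, Y q, Z q)) (uncurry3 f)); [| exact Hf].
  apply (continuous_comp_2 (fun q => (X q, Y q)) Z pair); [| exact HZ |].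
  - apply (continuous_comp_2 X Y pair); [exact HX | exact HY |].
    apply continuous_ext with (f := fun q : R * R => q);
      [intros []; reflexivity | apply continuous_id].
  - apply continuous_ext with (f := fun q : R * R * R => q);
      [intros []; reflexivity | apply continuous_id].
Qed.

Lemma continuous_uncurry2_slice (f : R -> R -> R) s th :
  continuous (uncurry2 f) (s, th) -> continuous (f s) th.
Proof.
  intros Hf. apply (continuous_comp_2 (fun _ => s) (fun th => th) f); [| apply continuous_id | exact Hf].
  apply continuous_const.
Qed.

Ltac continuity_R := repeat match goal with
  | |- continuous (fun _ => _ + _) _ => apply continuous_Rplus
  | |- continuous (fun _ => _ - _) _ => apply continuous_Rminus
  | |- continuous (fun _ => _ * _) _ => apply continuous_Rmult
  | |- continuous (fun _ => - _) _ => apply continuous_Ropp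
  | |- continuous (fun _ => cos _) _ => apply continuous_Rcos
  | |- continuous (fun _ => sin _) _ => apply continuous_Rsin
  | |- continuous cos _ => apply continuous_cos
  | |- continuous sin _ => apply continuous_sin
  | |- continuous (fun _ => ?c) _ => apply continuous_const
  | |- continuous (fun q => q) _ => apply continuous_id
  | |- continuous (fun q => fst q) _ => apply continuous_fst
  | |- continuous fst _ => apply continuous_fst
  | |- continuous snd _ => apply continuous_snd
  | |- continuous (fun q => snd q) _ => apply continuous_snd
  end.

Lemma is_derive_Rplus (f h : R -> R) x df dh :
  is_derive f x df -> is_derive h x dh -> is_derive (fun s => f s + h s) x (df + dh).
Proof. apply (is_derive_plus f h). Qed.

Lemma is_derive_Rminus (f h : R -> R) x df dh :
  is_derive f x df -> is_derive h x dh -> is_derive (fun s => f s - h s) x (df - dh).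
Proof. apply (is_derive_minus f h). Qed.

Lemma is_derive_Rmult (f h : R -> R) x df dh :
  is_derive f x df -> is_derive h x dh ->
  is_derive (fun s => f s * h s) x (df * h x + f x * dh).
Proof. intros Hf Hh; apply (is_derive_mult f h); auto; intros; apply Rmult_comm. Qed.

Lemma is_derive_Rmult_l (f : R -> R) c x df :
  is_derive f x df -> is_derive (fun s => c * f s) x (c * df).
Proof.
  intros Hf. replace (c * df) with (0 * f x + c * df) by ring.
  apply (is_derive_Rmult (fun _ => c) f); [apply (is_derive_const c) | exact Hf].
Qed.

Lemma is_derive_Rmult_r (f : R -> R) c x df :
  is_derive f x df -> is_derive (fun s => f s * c) x (df * c).
Proof.
  intros Hf. replace (df * c) with (df * c + f x * 0) by ring.
  apply (is_derive_Rmult f (fun _ => c)); [exact Hf | apply (is_derive_const c)].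
Qed.

Lemma is_derive_eq (f : R -> R) x l1 l2 : is_derive f x l1 -> is_derive f x l2 -> l1 = l2.
Proof. intros H1 H2; rewrite <- (is_derive_unique f x l1 H1); apply is_derive_unique, H2. Qed.

Lemma is_derive_comp_2d (h : R -> R -> R) (X Y : R -> R) v dX dY :
  differentiable_pt_lim h (X v) (Y v) (dx h (X v) (Y v)) (dy h (X v) (Y v)) ->
  is_derive X v dX -> is_derive Y v dY ->
  is_derive (fun v => h (X v) (Y v)) v (dx h (X v) (Y v) * dX + dy h (X v) (Y v) * dY).
Proof.
  intros Hh HX HY; apply is_derive_Reals.
  apply derivable_pt_lim_comp_2d; [exact Hh | apply is_derive_Reals; assumption ..].
Qed.

Lemma Rabs_le_between a b c :
  Rmin a b <= c <= Rmax a b -> Rabs (c - a) <= Rabs (b - a).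
Proof.
  unfold Rmin, Rmax; destruct (Rle_dec a b); intros; unfold Rabs;
  repeat destruct Rcase_abs; lra.
Qed.

Lemma MVT_Rabs (f : R -> R) x u :
  (forall a, Rabs (a - x) <= Rabs (u - x) -> ex_derive f a) ->
  exists xi, Rabs (xi - x) <= Rabs (u - x) /\ f u - f x = Derive f xi * (u - x).
Proof.
  intros Hf.
  destruct (MVT_gen f x u (Derive f)) as [xi [Hxi E]].
  - intros a Ha; apply Derive_correct, Hf, Rabs_le_between; lra.
  - intros a Ha; apply continuity_pt_filterlim, (ex_derive_continuous f), Hf, Rabs_le_between, Ha.
  - exists xi; split; [apply Rabs_le_between, Hxi | exact E].
Qed.

Lemma differentiable_pt_lim_partials (f : R -> R -> R) x y :
  locally_2d (fun u v => ex_derive (fun z => f z v) u /\ ex_derive (fun z => f u z) v) x y ->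
  continuous (uncurry2 (dx f)) (x, y) -> continuous (uncurry2 (dy f)) (x, y) ->
  differentiable_pt_lim f x y (dx f x y) (dy f x y).
Proof.
  intros [d0 Hd] Cx Cy eps.
  apply continuity_2d_pt_filterlim in Cx, Cy.
  assert (He2 : 0 < eps / 2) by (destruct eps; simpl; lra).
  destruct (Cx (mkposreal _ He2)) as [d1 H1]; destruct (Cy (mkposreal _ He2)) as [d2 H2].
  assert (Hd' : 0 < Rmin d0 (Rmin d1 d2)) by (repeat apply Rmin_pos; apply cond_pos).
  exists (mkposreal _ Hd'); simpl; intros u v Hu Hv.
  assert (Hm0 := Rmin_l d0 (Rmin d1 d2)); assert (Hm1 := Rmin_l d1 d2);
  assert (Hm2 := Rmin_r d1 d2); assert (Hm3 := Rmin_r d0 (Rmin d1 d2)).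
  assert (Hx0 : Rabs (x - x) = 0) by (rewrite Rminus_eq_0; apply Rabs_R0).
  (* f(u,v) - f(x,y) = (f(u,v) - f(x,v)) + (f(x,v) - f(x,y)), each by the mean value theorem *)
  destruct (MVT_Rabs (fun a => f a v) x u) as [xi [Hxi Exi]].
  { intros a Ha; refine (proj1 (Hd a v _ _)); lra. }
  destruct (MVT_Rabs (fun b => f x b) y v) as [eta [Heta Eeta]].
  { intros b Hb; refine (proj2 (Hd x b _ _)); lra. }
  replace (f u v - f x y - (dx f x y * (u - x) + dy f x y * (v - y)))
    with ((dx f xi v - dx f x y) * (u - x) + (dy f x eta - dy f x y) * (v - y))
    by (unfold dx, dy; lra).
  assert (B1 : Rabs (dx f xi v - dx f x y) < eps / 2) by (apply H1; lra).
  assert (B2 : Rabs (dy f x eta - dy f x y) < eps / 2) by (apply H2; lra).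
  eapply Rle_trans; [apply Rabs_triang |]; rewrite !Rabs_mult.
  assert (Ma := Rmax_l (Rabs (u - x)) (Rabs (v - y))).
  assert (Mb := Rmax_r (Rabs (u - x)) (Rabs (v - y))).
  assert (Pa := Rabs_pos (u - x)); assert (Pb := Rabs_pos (v - y)).
  assert (Pc := Rabs_pos (dx f xi v - dx f x y)); assert (Pd := Rabs_pos (dy f x eta - dy f x y)).
  nra.
Qed.

Lemma eq_of_is_derive_vanishing_inside (f df : R -> R) r :
  0 < r -> (forall s, 0 <= s <= r -> is_derive f s (df s)) ->
  (forall s, 0 < s < r -> df s = 0) -> f r = f 0.
Proof.
  intros Hr Hd H0.
  destruct (MVT_cor2 f df 0 r Hr) as [c [E Hc]].
  - intros c Hc; apply is_derive_Reals, Hd, Hc.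
  - rewrite H0 in E by exact Hc; lra.
Qed.

Lemma locally_Rabs_lt s rho : Rabs s < rho -> locally s (fun s' => Rabs s' < rho).
Proof.
  intros Hs. assert (He : 0 < rho - Rabs s) by lra.
  exists (mkposreal _ He); intros s' Hs'. change (Rabs (s' - s) < rho - Rabs s) in Hs'.
  assert (T := Rabs_triang_inv s' s). lra.
Qed.

Lemma locally_Rabs_sub_lt x e : 0 < e -> locally x (fun v => Rabs (v - x) < e).
Proof. intros He; exists (mkposreal e He); auto. Qed.

Lemma locally_open_ivl a b s : open_ivl a b s -> locally s (open_ivl a b).
Proof. apply (open_and _ _ (open_Rbar_gt a) (open_Rbar_lt b)). Qed.

Lemma locally_2d_prod (P Q : R -> Prop) x y :
  locally x P -> locally y Q -> locally_2d (fun u v => P u /\ Q v) x y.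
Proof.
  intros [d1 H1] [d2 H2].
  exists (mkposreal _ (Rmin_pos _ _ (cond_pos d1) (cond_pos d2))); simpl; intros u v Hu Hv.
  assert (M1 := Rmin_l d1 d2); assert (M2 := Rmin_r d1 d2).
  split; [apply H1; change (Rabs (u - x) < d1) | apply H2; change (Rabs (v - y) < d2)]; lra.
Qed.

Lemma RInt_Rext (f h : R -> R) a b :
  (forall x, f x = h x) -> RInt f a b = RInt h a b :> R.
Proof. intros E; apply RInt_ext; intros; apply E. Qed.

Lemma RInt_Rplus (f h : R -> R) a b :
  (forall x, continuous f x) -> (forall x, continuous h x) ->
  RInt (fun x => f x + h x) a b = RInt f a b + RInt h a b :> R.
Proof.
  intros Hf Hh. apply (RInt_plus f h); apply (ex_RInt_continuous); auto.
Qed.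

Lemma RInt_Rmult_l (f : R -> R) c a b :
  (forall x, continuous f x) -> RInt (fun x => c * f x) a b = c * RInt f a b :> R.
Proof. intros Hf. apply (RInt_scal f), (ex_RInt_continuous); auto. Qed.

Lemma RInt_antiderivative (X dX : R -> R) lo hi :
  (forall x, is_derive X x (dX x)) -> (forall x, continuous dX x) ->
  RInt dX lo hi = X hi - X lo :> R.
Proof. intros HX HdX; apply (is_RInt_unique dX), (is_RInt_derive X dX); auto. Qed.

Lemma RInt_cos_cos : RInt (fun th => cos th * cos th) 0 (2 * PI) = PI :> R.
Proof.
  rewrite (RInt_antiderivative (fun th => (th + sin th * cos th) / 2)).
  - rewrite sin_2PI, sin_0; field.
  - intros x; auto_derive; auto. assert (H := sin2_cos2 x); unfold Rsqr in H; lra.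
  - intros x; continuity_R.
Qed.

Lemma RInt_sin_sin : RInt (fun th => sin th * sin th) 0 (2 * PI) = PI :> R.
Proof.
  rewrite (RInt_antiderivative (fun th => (th - sin th * cos th) / 2)).
  - rewrite sin_2PI, sin_0; field.
  - intros x; auto_derive; auto. assert (H := sin2_cos2 x); unfold Rsqr in H; lra.
  - intros x; continuity_R.
Qed.

Lemma RInt_sin_cos : RInt (fun th => sin th * cos th) 0 (2 * PI) = 0 :> R.
Proof.
  rewrite (RInt_antiderivative (fun th => sin th * sin th / 2)).
  - rewrite sin_2PI, sin_0; field.
  - intros x; auto_derive; auto; field.
  - intros x; continuity_R.
Qed.

(* Radial parts of the polar Laplacian on the first two Fourier modes: the
   Euler equations [s^2 F'' + s F' - k^2 F = 0] with k = 0 and k = 1. *)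
Lemma euler_mode0 (F1 F2 : R -> R) r :
  0 < r -> (forall s, 0 <= s <= r -> is_derive F1 s (F2 s)) ->
  (forall s, 0 <= s <= r -> s * F1 s + s ^ 2 * F2 s = 0) -> F1 r = 0.
Proof.
  intros Hr Hd HE.
  assert (E : r * F1 r = 0 * F1 0).
  { apply (eq_of_is_derive_vanishing_inside (fun s => s * F1 s) (fun s => 1 * F1 s + s * F2 s)); auto.
    - intros s Hs; apply (is_derive_Rmult (fun s => s) F1); [apply (@is_derive_id R_AbsRing) | auto].
    - intros s Hs. assert (E := HE s ltac:(lra)).
      apply (Rmult_eq_reg_l s); [| lra]. rewrite Rmult_0_r, <- E; ring. }
  rewrite Rmult_0_l in E. apply Rmult_integral in E; destruct E; [lra | auto].
Qed.

Lemma euler_mode1 (F0 F1 F2 : R -> R) r :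
  0 < r -> (forall s, 0 <= s <= r -> is_derive F0 s (F1 s)) ->
  (forall s, 0 <= s <= r -> is_derive F1 s (F2 s)) ->
  (forall s, 0 <= s <= r -> s * F1 s + s ^ 2 * F2 s = F0 s) ->
  F0 0 = 0 -> F0 r = r * F1 0.
Proof.
  intros Hr D0 D1 HE H0.
  (* s (s F1 - F0) has derivative s F1 + s^2 F2 - F0 = 0, hence F0 = s F1 *)
  assert (HF0 : forall s, 0 < s <= r -> F0 s = s * F1 s).
  { intros s Hs.
    assert (E : s * (s * F1 s - F0 s) = 0 * (0 * F1 0 - F0 0)).
    { apply (eq_of_is_derive_vanishing_inside (fun s => s * (s * F1 s - F0 s))
               (fun s => s * F1 s + s ^ 2 * F2 s - F0 s)); [lra | | intros; rewrite HE by lra; ring].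
      intros a Ha.
      replace (a * F1 a + a ^ 2 * F2 a - F0 a)
        with (1 * (a * F1 a - F0 a) + a * ((1 * F1 a + a * F2 a) - F1 a)) by ring.
      apply (is_derive_Rmult (fun s => s) (fun s => s * F1 s - F0 s)); [apply (@is_derive_id R_AbsRing) |].
      apply (is_derive_Rminus (fun s => s * F1 s) F0); [| apply D0; lra].
      apply (is_derive_Rmult (fun s => s) F1); [apply (@is_derive_id R_AbsRing) | apply D1; lra]. }
    rewrite Rmult_0_l in E. apply Rmult_integral in E; destruct E; lra. }
  assert (E : F1 r = F1 0).
  { apply (eq_of_is_derive_vanishing_inside F1 F2); auto.
    intros s Hs. assert (E := HE s ltac:(lra)). rewrite HF0 in E by lra.
    apply (Rmult_eq_reg_l (s ^ 2)); [lra | apply pow_nonzero; lra]. }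
  rewrite HF0, E by lra; reflexivity.
Qed.

Definition angular_moment (f : R -> R -> R) (phi : R -> R) (s : R) : R :=
  RInt (fun th => f s th * phi th) 0 (2 * PI).

Lemma is_derive_angular_moment (f df : R -> R -> R) phi s0 :
  locally s0 (fun s => forall th, is_derive (fun s => f s th) s (df s th)) ->
  (forall th, continuous (uncurry2 df) (s0, th)) ->
  locally s0 (fun s => forall th, continuous (f s) th) ->
  (forall th, continuous phi th) ->
  is_derive (angular_moment f phi) s0 (angular_moment df phi s0).
Proof.
  intros Hd Hc Hf Hphi.
  assert (Hd' : locally s0 (fun s => forall th,
                  is_derive (fun s => f s th * phi th) s (df s th * phi th))).
  { eapply filter_imp; [| exact Hd]; intros s Hs th; apply is_derive_Rmult_r, Hs. }
  unfold angular_moment.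
  replace (RInt (fun th => df s0 th * phi th) 0 (2 * PI))
    with (RInt (fun th => Derive (fun s => f s th * phi th) s0) 0 (2 * PI)).
  2:{ apply RInt_ext; intros th _; apply is_derive_unique.
      destruct Hd' as [e He]; apply He, ball_center. }
  apply is_derive_RInt_param.
  - eapply filter_imp; [| exact Hd']; intros s Hs th _; eexists; apply Hs.
  - intros th _.
    apply continuity_2d_pt_ext_loc with (f := fun s th => df s th * phi th).
    + destruct Hd' as [e He]; exists e; intros s th' Hs _.
      symmetry; apply is_derive_unique, He, Hs.
    + apply continuity_2d_pt_filterlim.
      apply (continuous_Rmult (uncurry2 df) (fun q : R * R => phi (snd q))); [apply Hc |].
      apply (continuous_comp (fun q : R * R => snd q) phi); [apply continuous_snd | apply Hphi].
  - eapply filter_imp; [| exact Hf]; intros s Hs.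
    apply (ex_RInt_continuous (V := R_CompleteNormedModule)); intros th _.
    apply continuous_Rmult; [apply Hs | apply Hphi].
Qed.

Section Polar.
Variables (a b : R).

Definition polar (h : R -> R -> R) (s th : R) : R := h (a + s * cos th) (b + s * sin th).

Lemma polar_periodic h s : polar h s (2 * PI) = polar h s 0.
Proof. unfold polar; rewrite cos_2PI, sin_2PI, cos_0, sin_0; reflexivity. Qed.

Lemma polar_origin h th : polar h 0 th = h a b.
Proof. unfold polar; rewrite !Rmult_0_l, !Rplus_0_r; reflexivity. Qed.

Lemma continuous_polar h s th :
  continuous (uncurry2 h) (a + s * cos th, b + s * sin th) ->
  continuous (uncurry2 (polar h)) (s, th).
Proof.
  intros Hh.
  apply (continuous_comp_2 (fun q : R * R => a + fst q * cos (snd q))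
           (fun q : R * R => b + fst q * sin (snd q)) h); [continuity_R .. | exact Hh].
Qed.

Section Derivatives.
Variables (h : R -> R -> R) (s th : R).
Hypothesis h_diff :
  differentiable_pt_lim h (a + s * cos th) (b + s * sin th)
    (dx h (a + s * cos th) (b + s * sin th)) (dy h (a + s * cos th) (b + s * sin th)).

Lemma is_derive_polar_s :
  is_derive (fun s => polar h s th) s
    (cos th * polar (dx h) s th + sin th * polar (dy h) s th).
Proof.
  unfold polar.
  replace (cos th * _ + sin th * _) with
    (dx h (a + s * cos th) (b + s * sin th) * cos th + dy h (a + s * cos th) (b + s * sin th) * sin th)
    by ring.
  apply (is_derive_comp_2d h (fun s => a + s * cos th) (fun s => b + s * sin th)); [exact h_diff | ..];
    auto_derive; auto; ring.
Qed.

Lemma is_derive_polar_th :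
  is_derive (fun th => polar h s th) th
    (s * (cos th * polar (dy h) s th - sin th * polar (dx h) s th)).
Proof.
  unfold polar.
  replace (s * _) with
    (dx h (a + s * cos th) (b + s * sin th) * (- s * sin th)
     + dy h (a + s * cos th) (b + s * sin th) * (s * cos th)) by ring.
  apply (is_derive_comp_2d h (fun th => a + s * cos th) (fun th => b + s * sin th)); [exact h_diff | ..];
    auto_derive; auto; ring.
Qed.

End Derivatives.

Section HarmonicDisk.
Variables (U : R -> R -> Prop) (g : R -> R -> R) (rho : R).
Hypothesis U_open : open2 U.
Hypothesis g_harmonic : harmonic_on g U.
Hypothesis disk_in_U : forall s th, Rabs s < rho -> U (a + s * cos th) (b + s * sin th).

(* [g_t] is [s^-1 ∂_θ (polar g)] and [g_tt] is [∂_θ g_t]. *)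
Definition g_r s th := cos th * polar (dx g) s th + sin th * polar (dy g) s th.
Definition g_rr s th :=
  cos th * (cos th * polar (dx (dx g)) s th + sin th * polar (dy (dx g)) s th)
  + sin th * (cos th * polar (dx (dy g)) s th + sin th * polar (dy (dy g)) s th).
Definition g_t s th := cos th * polar (dy g) s th - sin th * polar (dx g) s th.
Definition g_tt s th :=
  (- sin th * polar (dy g) s th
   + cos th * (s * (cos th * polar (dy (dy g)) s th - sin th * polar (dx (dy g)) s th)))
  - (cos th * polar (dx g) s th
     + sin th * (s * (cos th * polar (dy (dx g)) s th - sin th * polar (dx (dx g)) s th))).

Lemma C2_differentiable x y : U x y ->
  differentiable_pt_lim g x y (dx g x y) (dy g x y) /\
  differentiable_pt_lim (dx g) x y (dx (dx g) x y) (dy (dx g) x y) /\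
  differentiable_pt_lim (dy g) x y (dx (dy g) x y) (dy (dy g) x y).
Proof.
  intros Hxy.
  assert (HU : locally_2d U x y) by apply locally_2d_locally, U_open, Hxy.
  destruct (proj1 g_harmonic x y Hxy) as (_&_&_&_&_&_&_&C1&C2&C3&C4&C5&C6).
  split; [| split]; apply differentiable_pt_lim_partials; try assumption;
    (eapply locally_2d_impl; [| exact HU]); apply locally_2d_forall;
    intros u v Huv; destruct (proj1 g_harmonic u v Huv) as (?&?&?&?&?&?&_); auto.
Qed.

Lemma is_derive_polar_g_s s th : Rabs s < rho ->
  is_derive (fun s => polar g s th) s (g_r s th).
Proof. intros Hs; apply is_derive_polar_s, (C2_differentiable _ _ (disk_in_U s th Hs)). Qed.

Lemma is_derive_g_r s th : Rabs s < rho -> is_derive (fun s => g_r s th) s (g_rr s th).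
Proof.
  intros Hs; destruct (C2_differentiable _ _ (disk_in_U s th Hs)) as (_&Dx&Dy).
  apply is_derive_Rplus; apply is_derive_Rmult_l, is_derive_polar_s; assumption.
Qed.

Lemma is_derive_polar_g_th s th : Rabs s < rho ->
  is_derive (fun th => polar g s th) th (s * g_t s th).
Proof. intros Hs; apply is_derive_polar_th, (C2_differentiable _ _ (disk_in_U s th Hs)). Qed.

Lemma is_derive_g_t s th : Rabs s < rho -> is_derive (fun th => g_t s th) th (g_tt s th).
Proof.
  intros Hs; destruct (C2_differentiable _ _ (disk_in_U s th Hs)) as (_&Dx&Dy).
  unfold g_t, g_tt.
  apply is_derive_Rminus.
  - apply (is_derive_Rmult cos (fun th => polar (dy g) s th)); [| apply is_derive_polar_th, Dy].
    auto_derive; auto; ring.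
  - apply (is_derive_Rmult sin (fun th => polar (dx g) s th)); [| apply is_derive_polar_th, Dx].
    auto_derive; auto; ring.
Qed.

Lemma polar_laplacian s th : Rabs s < rho -> g_r s th + s * g_rr s th + g_tt s th = 0.
Proof.
  intros Hs. assert (L := proj2 g_harmonic _ _ (disk_in_U s th Hs)).
  change (polar (dx (dx g)) s th + polar (dy (dy g)) s th = 0) in L.
  transitivity (s * (polar (dx (dx g)) s th + polar (dy (dy g)) s th) * (sin th ^ 2 + cos th ^ 2)).
  - unfold g_r, g_rr, g_tt; ring.
  - rewrite L; ring.
Qed.

Lemma continuous_polar_g s th : Rabs s < rho ->
  continuous (uncurry2 (polar g)) (s, th) /\ continuous (uncurry2 g_r) (s, th) /\
  continuous (uncurry2 g_rr) (s, th) /\ continuous (uncurry2 g_t) (s, th) /\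
  continuous (uncurry2 g_tt) (s, th).
Proof.
  intros Hs.
  destruct (proj1 g_harmonic _ _ (disk_in_U s th Hs)) as (_&_&_&_&_&_&C&Cx&Cy&Cxx&Cyx&Cxy&Cyy).
  unfold uncurry2, g_r, g_rr, g_t, g_tt.
  repeat split; continuity_R; apply continuous_polar; assumption.
Qed.

Lemma continuous_polar_g_slice s th : Rabs s < rho ->
  continuous (polar g s) th /\ continuous (g_r s) th /\ continuous (g_rr s) th /\
  continuous (g_t s) th /\ continuous (g_tt s) th.
Proof.
  intros Hs; destruct (continuous_polar_g s th Hs) as (C0&C1&C2&C3&C4).
  repeat split; apply continuous_uncurry2_slice; assumption.
Qed.

Lemma is_derive_moment_polar_g phi s : Rabs s < rho -> (forall th, continuous phi th) ->
  is_derive (angular_moment (polar g) phi) s (angular_moment g_r phi s).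
Proof.
  intros Hs Hphi.
  apply is_derive_angular_moment; [| intros th; apply (continuous_polar_g s th Hs) | | exact Hphi];
    (eapply filter_imp; [| apply (locally_Rabs_lt s rho Hs)]); intros s' Hs' th.
  - apply is_derive_polar_g_s, Hs'.
  - apply (continuous_polar_g_slice s' th Hs').
Qed.

Lemma is_derive_moment_g_r phi s : Rabs s < rho -> (forall th, continuous phi th) ->
  is_derive (angular_moment g_r phi) s (angular_moment g_rr phi s).
Proof.
  intros Hs Hphi.
  apply is_derive_angular_moment; [| intros th; apply (continuous_polar_g s th Hs) | | exact Hphi];
    (eapply filter_imp; [| apply (locally_Rabs_lt s rho Hs)]); intros s' Hs' th.
  - apply is_derive_g_r, Hs'.
  - apply (continuous_polar_g_slice s' th Hs').
Qed.

Section AngularWeight.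
Variables (phi psi : R -> R) (lam : R).
Hypothesis phi_derive : forall th, is_derive phi th (psi th).
Hypothesis psi_derive : forall th, is_derive psi th (- (lam * phi th)).
Hypotheses (phi_periodic : phi (2 * PI) = phi 0) (psi_periodic : psi (2 * PI) = psi 0).

Let phi_continuous th : continuous phi th.
Proof. apply (ex_derive_continuous phi); eexists; apply phi_derive. Qed.
Let psi_continuous th : continuous psi th.
Proof. apply (ex_derive_continuous psi); eexists; apply psi_derive. Qed.

(* [s g_tt] is the second [θ]-derivative of [polar g] and [phi'' = - lam phi]. *)
Lemma moment_g_tt_by_parts s : Rabs s < rho ->
  RInt (fun th => s * g_tt s th * phi th) 0 (2 * PI) = - lam * angular_moment (polar g) phi s.
Proof.
  intros Hs. pose proof (fun th => continuous_polar_g_slice s th Hs) as C.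
  set (X := fun th => s * g_t s th * phi th - polar g s th * psi th).
  assert (RX : RInt (fun th => s * g_tt s th * phi th + lam * (polar g s th * phi th)) 0 (2 * PI)
               = X (2 * PI) - X 0).
  { apply RInt_antiderivative.
    - intros th. unfold X.
      replace (s * g_tt s th * phi th + lam * (polar g s th * phi th))
        with ((0 * g_t s th + s * g_tt s th) * phi th + s * g_t s th * psi th
              - ((s * g_t s th) * psi th + polar g s th * (- (lam * phi th)))) by ring.
      apply is_derive_Rminus.
      + apply (is_derive_Rmult (fun th => s * g_t s th) phi); [| apply phi_derive].
        apply (is_derive_Rmult (fun _ => s) (fun th => g_t s th));
          [apply (is_derive_const s) | apply is_derive_g_t, Hs].
      + apply (is_derive_Rmult (fun th => polar g s th) psi);
          [apply is_derive_polar_g_th, Hs | apply psi_derive].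
    - intros th; destruct (C th) as (?&?&?&?&?); continuity_R; auto. }
  unfold X, g_t in RX.
  rewrite !polar_periodic, phi_periodic, psi_periodic, cos_2PI, sin_2PI, cos_0, sin_0 in RX.
  rewrite RInt_Rplus, RInt_Rmult_l in RX; [unfold angular_moment; lra | ..];
    intros th; destruct (C th) as (?&?&?&?&?); continuity_R; auto.
Qed.

Lemma angular_moment_identity s : Rabs s < rho ->
  s * angular_moment g_r phi s + s ^ 2 * angular_moment g_rr phi s
  = lam * angular_moment (polar g) phi s.
Proof.
  intros Hs. pose proof (fun th => continuous_polar_g_slice s th Hs) as C.
  unfold angular_moment.
  rewrite <- (RInt_Rmult_l _ s), <- (RInt_Rmult_l _ (s ^ 2)), <- RInt_Rplus;
    try (intros th; destruct (C th) as (?&?&?&?&?); continuity_R; auto).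
  rewrite (RInt_Rext _ (fun th => -1 * (s * g_tt s th * phi th))).
  - rewrite RInt_Rmult_l, (moment_g_tt_by_parts s Hs); [unfold angular_moment; ring |].
    intros th; destruct (C th) as (?&?&?&?&?); continuity_R; auto.
  - intros th. assert (L := polar_laplacian s th Hs).
    transitivity (s * phi th * (g_r s th + s * g_rr s th + g_tt s th) - s * g_tt s th * phi th); [ring |].
    rewrite L; ring.
Qed.

End AngularWeight.

Lemma radial_mean_vanishes r : 0 < r < rho -> RInt (g_r r) 0 (2 * PI) = 0 :> R.
Proof.
  intros Hr.
  assert (Hle : forall s, 0 <= s <= r -> Rabs s < rho) by (intros; rewrite Rabs_pos_eq; lra).
  rewrite (RInt_Rext _ (fun th => g_r r th * 1)) by (intros; ring).
  apply (euler_mode0 (angular_moment g_r (fun _ => 1)) (angular_moment g_rr (fun _ => 1)) r);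
    [lra | intros s Hs | intros s Hs].
  - apply is_derive_moment_g_r; [apply Hle, Hs | intros; apply continuous_const].
  - rewrite (angular_moment_identity (fun _ => 1) (fun _ => 0) 0); auto;
      solve [ring | intros; auto_derive; auto; ring].
Qed.

Lemma angular_moment_polar_g_linear (phi psi : R -> R) r :
  0 < r < rho ->
  (forall th, is_derive phi th (psi th)) -> (forall th, is_derive psi th (- phi th)) ->
  phi (2 * PI) = phi 0 -> psi (2 * PI) = psi 0 ->
  angular_moment (polar g) phi r = r * angular_moment g_r phi 0.
Proof.
  intros Hr Dphi Dpsi Pphi Ppsi.
  assert (Cphi : forall th, continuous phi th)
    by (intros th; apply (ex_derive_continuous phi); eexists; apply Dphi).
  assert (Hle : forall s, 0 <= s <= r -> Rabs s < rho) by (intros; rewrite Rabs_pos_eq; lra).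
  apply (euler_mode1 _ _ (angular_moment g_rr phi)); [lra | intros s Hs .. |].
  - apply is_derive_moment_polar_g; auto.
  - apply is_derive_moment_g_r; auto.
  - rewrite (angular_moment_identity phi psi 1); auto; [ring |].
    intros th; rewrite Rmult_1_l; apply Dpsi.
  - unfold angular_moment.
    rewrite (RInt_Rext _ (fun th => g a b * phi th)) by (intros; rewrite polar_origin; reflexivity).
    rewrite RInt_Rmult_l, (RInt_antiderivative (fun th => - psi th) phi), Ppsi; auto; [ring |].
    intros th; replace (phi th) with (- - phi th) by ring; exact (is_derive_opp psi th _ (Dpsi th)).
Qed.

Lemma dx_circle_formula r : 0 < r < rho ->
  dx g a b = / (PI * r) * RInt (fun th => g (a + r * cos th) (b + r * sin th) * cos th) 0 (2 * PI).
Proof.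
  intros Hr. assert (HPI := PI_RGT_0).
  change (RInt _ 0 (2 * PI)) with (angular_moment (polar g) cos r).
  rewrite (angular_moment_polar_g_linear cos (fun th => - sin th) r Hr);
    [| intros; auto_derive; auto; ring .. | rewrite cos_2PI, cos_0; reflexivity
     | rewrite sin_2PI, sin_0; reflexivity].
  unfold angular_moment, g_r.
  rewrite (RInt_Rext _ (fun th => dx g a b * (cos th * cos th) + dy g a b * (sin th * cos th)))
    by (intros; rewrite !polar_origin; ring).
  rewrite RInt_Rplus, !RInt_Rmult_l, RInt_cos_cos, RInt_sin_cos by (intros; continuity_R).
  field; lra.
Qed.

Lemma dy_circle_formula r : 0 < r < rho ->
  dy g a b = / (PI * r) * RInt (fun th => g (a + r * cos th) (b + r * sin th) * sin th) 0 (2 * PI).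
Proof.
  intros Hr. assert (HPI := PI_RGT_0).
  change (RInt _ 0 (2 * PI)) with (angular_moment (polar g) sin r).
  rewrite (angular_moment_polar_g_linear sin cos r Hr);
    [| intros; auto_derive; auto; ring .. | rewrite sin_2PI, sin_0; reflexivity
     | rewrite cos_2PI, cos_0; reflexivity].
  unfold angular_moment, g_r.
  rewrite (RInt_Rext _ (fun th => dx g a b * (sin th * cos th) + dy g a b * (sin th * sin th)))
    by (intros; rewrite !polar_origin; ring).
  rewrite RInt_Rplus, !RInt_Rmult_l, RInt_sin_sin, RInt_sin_cos by (intros; continuity_R).
  field; lra.
Qed.

End HarmonicDisk.
End Polar.

Section Divergence.
Variables (U : R -> R -> Prop) (aI bI aJ bJ : Rbar) (u t : R -> R -> R -> R).
Hypothesis U_open : open2 U.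
Hypothesis u_C1 : C1_on3 u (fun x y s => U x y /\ open_ivl aJ bJ s).
Hypothesis t_C1 : C1_on3 t (fun x y z => U x y /\ open_ivl aI bI z).
Hypothesis t_in_J : forall x y z, U x y -> open_ivl aI bI z -> open_ivl aJ bJ (t x y z).
Hypothesis u_t_inverse : forall x y z, U x y -> open_ivl aI bI z -> u x y (t x y z) = z.
Hypothesis u_harmonic : forall s, open_ivl aJ bJ s -> harmonic_on (fun x y => u x y s) U.

Lemma locally_U_x x y : U x y -> locally x (fun x' => U x' y).
Proof. intros Hxy; apply locally_2d_1d_const_y, locally_2d_locally, U_open, Hxy. Qed.

Lemma locally_U_y x y : U x y -> locally y (fun y' => U x y').
Proof. intros Hxy; apply locally_2d_1d_const_x, locally_2d_locally, U_open, Hxy. Qed.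

Lemma u_differentiable_xs x y s : U x y -> open_ivl aJ bJ s ->
  differentiable_pt_lim (fun x' s' => u x' y s') x s (pdx u x y s) (pdz u x y s).
Proof.
  intros Hxy Hs.
  destruct (u_C1 x y s (conj Hxy Hs)) as (_&_&_&_&Cx&_&Cz).
  apply (differentiable_pt_lim_partials (fun x' s' => u x' y s')).
  - eapply locally_2d_impl;
      [| apply (locally_2d_prod _ _ _ _ (locally_U_x _ _ Hxy) (locally_open_ivl _ _ _ Hs))].
    apply locally_2d_forall; intros x' s' [H1 H2].
    destruct (u_C1 x' y s' (conj H1 H2)) as (Ex&_&Ez&_); split; assumption.
  - change (continuous (fun q : R * R => pdx u (fst q) y (snd q)) (x, s)).
    apply (continuous_comp3 (pdx u)); continuity_R; exact Cx.
  - change (continuous (fun q : R * R => pdz u (fst q) y (snd q)) (x, s)).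
    apply (continuous_comp3 (pdz u)); continuity_R; exact Cz.
Qed.

Lemma u_differentiable_ys x y s : U x y -> open_ivl aJ bJ s ->
  differentiable_pt_lim (fun y' s' => u x y' s') y s (pdy u x y s) (pdz u x y s).
Proof.
  intros Hxy Hs.
  destruct (u_C1 x y s (conj Hxy Hs)) as (_&_&_&_&_&Cy&Cz).
  apply (differentiable_pt_lim_partials (fun y' s' => u x y' s')).
  - eapply locally_2d_impl;
      [| apply (locally_2d_prod _ _ _ _ (locally_U_y _ _ Hxy) (locally_open_ivl _ _ _ Hs))].
    apply locally_2d_forall; intros y' s' [H1 H2].
    destruct (u_C1 x y' s' (conj H1 H2)) as (_&Ey&Ez&_); split; assumption.
  - change (continuous (fun q : R * R => pdy u x (fst q) (snd q)) (y, s)).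
    apply (continuous_comp3 (pdy u)); continuity_R; exact Cy.
  - change (continuous (fun q : R * R => pdz u x (fst q) (snd q)) (y, s)).
    apply (continuous_comp3 (pdz u)); continuity_R; exact Cz.
Qed.

Lemma continuous_u_C1 x y s : U x y -> open_ivl aJ bJ s ->
  continuous (uncurry3 u) (x, y, s) /\ continuous (uncurry3 (pdx u)) (x, y, s) /\
  continuous (uncurry3 (pdy u)) (x, y, s) /\ continuous (uncurry3 (pdz u)) (x, y, s).
Proof. intros HU HJ; destruct (u_C1 x y s (conj HU HJ)) as (_&_&_&?&?&?&?); auto. Qed.

Lemma continuous_t_C1 x y z : U x y -> open_ivl aI bI z ->
  continuous (uncurry3 t) (x, y, z) /\ continuous (uncurry3 (pdx t)) (x, y, z) /\
  continuous (uncurry3 (pdy t)) (x, y, z) /\ continuous (uncurry3 (pdz t)) (x, y, z).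
Proof. intros HU HI; destruct (t_C1 x y z (conj HU HI)) as (_&_&_&?&?&?&?); auto. Qed.

Ltac continuity_C1 :=
  repeat (progress continuity_R || match goal with
    | |- continuous (fun _ => ?f _ _ _) _ => apply (continuous_comp3 f)
    end);
  cbn [fst snd]; try assumption.

Lemma is_derive_u_xs (X S : R -> R) y v dX dS :
  U (X v) y -> open_ivl aJ bJ (S v) -> is_derive X v dX -> is_derive S v dS ->
  is_derive (fun v => u (X v) y (S v)) v (pdx u (X v) y (S v) * dX + pdz u (X v) y (S v) * dS).
Proof.
  intros HU HJ HX HS.
  apply (is_derive_comp_2d (fun x s => u x y s)); [apply u_differentiable_xs | ..]; assumption.
Qed.

Lemma is_derive_u_ys (Y S : R -> R) x v dY dS :
  U x (Y v) -> open_ivl aJ bJ (S v) -> is_derive Y v dY -> is_derive S v dS ->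
  is_derive (fun v => u x (Y v) (S v)) v (pdy u x (Y v) (S v) * dY + pdz u x (Y v) (S v) * dS).
Proof.
  intros HU HJ HY HS.
  apply (is_derive_comp_2d (fun y s => u x y s)); [apply u_differentiable_ys | ..]; assumption.
Qed.

Lemma is_derive_u_s (S : R -> R) x y v dS :
  U x y -> open_ivl aJ bJ (S v) -> is_derive S v dS ->
  is_derive (fun v => u x y (S v)) v (pdz u x y (S v) * dS).
Proof.
  intros HU HJ HS. rewrite Rmult_comm.
  apply (is_derive_comp (fun s => u x y s) S); [apply Derive_correct | exact HS].
  apply (u_C1 x y (S v) (conj HU HJ)).
Qed.

Lemma is_derive_t_x x y z : U x y -> open_ivl aI bI z ->
  is_derive (fun x' => t x' y z) x (pdx t x y z).
Proof. intros HU HI; apply Derive_correct, (t_C1 x y z (conj HU HI)). Qed.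

Lemma is_derive_t_y x y z : U x y -> open_ivl aI bI z ->
  is_derive (fun y' => t x y' z) y (pdy t x y z).
Proof. intros HU HI; apply Derive_correct, (t_C1 x y z (conj HU HI)). Qed.

Lemma is_derive_t_z x y z : U x y -> open_ivl aI bI z ->
  is_derive (fun z' => t x y z') z (pdz t x y z).
Proof. intros HU HI; apply Derive_correct, (t_C1 x y z (conj HU HI)). Qed.

Section ImplicitPartials.
Variables (x y z : R).
Hypotheses (Hxy : U x y) (Hz : open_ivl aI bI z).

Lemma pdz_u_t : pdz u x y (t x y z) * pdz t x y z = 1.
Proof.
  apply (is_derive_eq (fun z' => u x y (t x y z')) z).
  - apply is_derive_u_s; [exact Hxy | apply t_in_J; assumption | apply is_derive_t_z; assumption].
  - apply (is_derive_ext_loc (fun z' => z')); [| apply (@is_derive_id R_AbsRing)].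
    eapply filter_imp; [| apply (locally_open_ivl _ _ _ Hz)].
    intros z' Hz'; symmetry; apply u_t_inverse; assumption.
Qed.

Lemma pdx_t_implicit : pdx t x y z + pdx u x y (t x y z) * pdz t x y z = 0.
Proof.
  assert (E : pdx u x y (t x y z) * 1 + pdz u x y (t x y z) * pdx t x y z = 0).
  { apply (is_derive_eq (fun x' => u x' y (t x' y z)) x).
    - apply (is_derive_u_xs (fun x' => x') (fun x' => t x' y z)); [exact Hxy | apply t_in_J; assumption
      | apply (@is_derive_id R_AbsRing) | apply is_derive_t_x; assumption].
    - apply (is_derive_ext_loc (fun _ => z)); [| apply (is_derive_const z)].
      eapply filter_imp; [| apply (locally_U_x _ _ Hxy)].
      intros x' Hx'; symmetry; apply u_t_inverse; assumption. }
  transitivity (pdz t x y z * (pdx u x y (t x y z) * 1 + pdz u x y (t x y z) * pdx t x y z)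
                + pdx t x y z * (1 - pdz u x y (t x y z) * pdz t x y z)); [ring |].
  rewrite E, pdz_u_t; ring.
Qed.

Lemma pdy_t_implicit : pdy t x y z + pdy u x y (t x y z) * pdz t x y z = 0.
Proof.
  assert (E : pdy u x y (t x y z) * 1 + pdz u x y (t x y z) * pdy t x y z = 0).
  { apply (is_derive_eq (fun y' => u x y' (t x y' z)) y).
    - apply (is_derive_u_ys (fun y' => y') (fun y' => t x y' z)); [exact Hxy | apply t_in_J; assumption
      | apply (@is_derive_id R_AbsRing) | apply is_derive_t_y; assumption].
    - apply (is_derive_ext_loc (fun _ => z)); [| apply (is_derive_const z)].
      eapply filter_imp; [| apply (locally_U_y _ _ Hxy)].
      intros y' Hy'; symmetry; apply u_t_inverse; assumption. }
  transitivity (pdz t x y z * (pdy u x y (t x y z) * 1 + pdz u x y (t x y z) * pdy t x y z)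
                + pdy t x y z * (1 - pdz u x y (t x y z) * pdz t x y z)); [ring |].
  rewrite E, pdz_u_t; ring.
Qed.

End ImplicitPartials.

Section CircleDerivatives.
Variables (x y z r e : R).
Hypotheses (Hz : open_ivl aI bI z) (He : 0 < e).
Hypothesis center_in_U : forall v w, Rabs (v - x) < e -> Rabs (w - y) < e -> U v w.
Hypothesis circle_in_U :
  forall v w th, Rabs (v - x) < e -> Rabs (w - y) < e -> U (v + r * cos th) (w + r * sin th).
Variables (G : R -> R -> R -> R) (phi : R -> R).
Hypothesis phi_continuous : forall th, continuous phi th.
Hypothesis G_circle_repr : forall v w s, Rabs (v - x) < e -> Rabs (w - y) < e -> open_ivl aJ bJ s ->
  G v w s = / (PI * r) * RInt (fun th => u (v + r * cos th) (w + r * sin th) s * phi th) 0 (2 * PI).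

Let near_x : Rabs (x - x) < e. Proof. rewrite Rminus_eq_0, Rabs_R0; exact He. Qed.
Let near_y : Rabs (y - y) < e. Proof. rewrite Rminus_eq_0, Rabs_R0; exact He. Qed.

Lemma is_derive_circle_repr_x :
  is_derive (fun v => G v y (t v y z)) x
    (/ (PI * r) * RInt (fun th => (pdx u (x + r * cos th) (y + r * sin th) (t x y z)
        + pdz u (x + r * cos th) (y + r * sin th) (t x y z) * pdx t x y z) * phi th) 0 (2 * PI)).
Proof.
  apply (is_derive_ext_loc (fun v => / (PI * r) *
           angular_moment (fun v th => u (v + r * cos th) (y + r * sin th) (t v y z)) phi v)).
  { eapply filter_imp; [| apply (locally_Rabs_sub_lt x e He)].
    intros v Hv; symmetry; apply G_circle_repr; auto. }
  apply is_derive_Rmult_l.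
  apply (is_derive_angular_moment _ (fun v th =>
           pdx u (v + r * cos th) (y + r * sin th) (t v y z)
           + pdz u (v + r * cos th) (y + r * sin th) (t v y z) * pdx t v y z));
    [| intros th | | exact phi_continuous];
    try (eapply filter_imp; [| apply (locally_Rabs_sub_lt x e He)]; intros v Hv th).
  - replace (pdx u _ _ _ + _) with
      (pdx u (v + r * cos th) (y + r * sin th) (t v y z) * 1
       + pdz u (v + r * cos th) (y + r * sin th) (t v y z) * pdx t v y z) by ring.
    apply (is_derive_u_xs (fun v => v + r * cos th) (fun v => t v y z)); auto.
    + auto_derive; auto; ring.
    + apply is_derive_t_x; auto.
  - assert (HJ := t_in_J x y z (center_in_U x y near_x near_y) Hz).
    destruct (continuous_u_C1 _ _ _ (circle_in_U x y th near_x near_y) HJ) as (_&?&_&?).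
    destruct (continuous_t_C1 _ _ _ (center_in_U x y near_x near_y) Hz) as (?&?&_&_).
    unfold uncurry2; continuity_C1.
  - assert (HJ := t_in_J v y z (center_in_U v y Hv near_y) Hz).
    destruct (continuous_u_C1 _ _ _ (circle_in_U v y th Hv near_y) HJ) as (?&_&_&_).
    continuity_C1.
Qed.

Lemma is_derive_circle_repr_y :
  is_derive (fun w => G x w (t x w z)) y
    (/ (PI * r) * RInt (fun th => (pdy u (x + r * cos th) (y + r * sin th) (t x y z)
        + pdz u (x + r * cos th) (y + r * sin th) (t x y z) * pdy t x y z) * phi th) 0 (2 * PI)).
Proof.
  apply (is_derive_ext_loc (fun w => / (PI * r) *
           angular_moment (fun w th => u (x + r * cos th) (w + r * sin th) (t x w z)) phi w)).
  { eapply filter_imp; [| apply (locally_Rabs_sub_lt y e He)].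
    intros w Hw; symmetry; apply G_circle_repr; auto. }
  apply is_derive_Rmult_l.
  apply (is_derive_angular_moment _ (fun w th =>
           pdy u (x + r * cos th) (w + r * sin th) (t x w z)
           + pdz u (x + r * cos th) (w + r * sin th) (t x w z) * pdy t x w z));
    [| intros th | | exact phi_continuous];
    try (eapply filter_imp; [| apply (locally_Rabs_sub_lt y e He)]; intros w Hw th).
  - replace (pdy u _ _ _ + _) with
      (pdy u (x + r * cos th) (w + r * sin th) (t x w z) * 1
       + pdz u (x + r * cos th) (w + r * sin th) (t x w z) * pdy t x w z) by ring.
    apply (is_derive_u_ys (fun w => w + r * sin th) (fun w => t x w z)); auto.
    + auto_derive; auto; ring.
    + apply is_derive_t_y; auto.
  - assert (HJ := t_in_J x y z (center_in_U x y near_x near_y) Hz).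
    destruct (continuous_u_C1 _ _ _ (circle_in_U x y th near_x near_y) HJ) as (_&_&?&?).
    destruct (continuous_t_C1 _ _ _ (center_in_U x y near_x near_y) Hz) as (?&_&?&_).
    unfold uncurry2; continuity_C1.
  - assert (HJ := t_in_J x w z (center_in_U x w near_x Hw) Hz).
    destruct (continuous_u_C1 _ _ _ (circle_in_U x w th near_x Hw) HJ) as (?&_&_&_).
    continuity_C1.
Qed.

Lemma is_derive_circle_repr_z :
  is_derive (fun z' => G x y (t x y z')) z
    (/ (PI * r) * RInt (fun th => pdz u (x + r * cos th) (y + r * sin th) (t x y z)
        * pdz t x y z * phi th) 0 (2 * PI)).
Proof.
  pose proof (center_in_U x y near_x near_y) as Hxy.
  apply (is_derive_ext_loc (fun z' => / (PI * r) *
           angular_moment (fun z' th => u (x + r * cos th) (y + r * sin th) (t x y z')) phi z')).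
  { eapply filter_imp; [| apply (locally_open_ivl _ _ _ Hz)].
    intros z' Hz'; symmetry; apply G_circle_repr; auto. }
  apply is_derive_Rmult_l.
  apply (is_derive_angular_moment _ (fun z' th =>
           pdz u (x + r * cos th) (y + r * sin th) (t x y z') * pdz t x y z'));
    [| intros th | | exact phi_continuous];
    try (eapply filter_imp; [| apply (locally_open_ivl _ _ _ Hz)]; intros z' Hz' th).
  - apply (is_derive_u_s (fun z' => t x y z')); auto; apply is_derive_t_z; auto.
  - destruct (continuous_u_C1 _ _ _ (circle_in_U x y th near_x near_y) (t_in_J x y z Hxy Hz))
      as (_&_&_&?).
    destruct (continuous_t_C1 _ _ _ Hxy Hz) as (?&_&_&?).
    unfold uncurry2; continuity_C1.
  - destruct (continuous_u_C1 _ _ _ (circle_in_U x y th near_x near_y) (t_in_J x y z' Hxy Hz'))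
      as (?&_&_&_).
    continuity_C1.
Qed.

End CircleDerivatives.

Section AtPoint.
Variables (x y z d : R).
Hypotheses (Hz : open_ivl aI bI z) (Hd : 0 < d).
Hypothesis box_in_U : forall p q, Rabs (p - x) < d -> Rabs (q - y) < d -> U p q.

Lemma disk_in_box v w s th : Rabs (v - x) < d / 2 -> Rabs (w - y) < d / 2 -> Rabs s < d / 2 ->
  U (v + s * cos th) (w + s * sin th).
Proof.
  intros Hv Hw Hs.
  assert (Bc := COS_bound th); assert (Bs := SIN_bound th).
  apply box_in_U; [replace (v + s * cos th - x) with ((v - x) + s * cos th) by ring
                  | replace (w + s * sin th - y) with ((w - y) + s * sin th) by ring];
    eapply Rle_lt_trans; try apply Rabs_triang; rewrite Rabs_mult;
    [assert (Rabs (cos th) <= 1) by (apply Rabs_le; lra)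
    | assert (Rabs (sin th) <= 1) by (apply Rabs_le; lra)];
    assert (Pc := Rabs_pos s); nra.
Qed.

Lemma center_in_box v w : Rabs (v - x) < d / 2 -> Rabs (w - y) < d / 2 -> U v w.
Proof. intros Hv Hw; apply box_in_U; lra. Qed.

Lemma circle_in_box v w th : Rabs (v - x) < d / 2 -> Rabs (w - y) < d / 2 ->
  U (v + d / 4 * cos th) (w + d / 4 * sin th).
Proof. intros Hv Hw; apply disk_in_box; auto; rewrite Rabs_pos_eq; lra. Qed.

Lemma pdx_u_circle v w s : Rabs (v - x) < d / 2 -> Rabs (w - y) < d / 2 -> open_ivl aJ bJ s ->
  pdx u v w s = / (PI * (d / 4)) *
    RInt (fun th => u (v + d / 4 * cos th) (w + d / 4 * sin th) s * cos th) 0 (2 * PI).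
Proof.
  intros Hv Hw Hs.
  exact (dx_circle_formula v w U (fun a b => u a b s) (d / 2) U_open (u_harmonic s Hs)
           (fun s' th => disk_in_box v w s' th Hv Hw) (d / 4) ltac:(lra)).
Qed.

Lemma pdy_u_circle v w s : Rabs (v - x) < d / 2 -> Rabs (w - y) < d / 2 -> open_ivl aJ bJ s ->
  pdy u v w s = / (PI * (d / 4)) *
    RInt (fun th => u (v + d / 4 * cos th) (w + d / 4 * sin th) s * sin th) 0 (2 * PI).
Proof.
  intros Hv Hw Hs.
  exact (dy_circle_formula v w U (fun a b => u a b s) (d / 2) U_open (u_harmonic s Hs)
           (fun s' th => disk_in_box v w s' th Hv Hw) (d / 4) ltac:(lra)).
Qed.

Let near_x : Rabs (x - x) < d / 2. Proof. rewrite Rminus_eq_0, Rabs_R0; lra. Qed.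
Let near_y : Rabs (y - y) < d / 2. Proof. rewrite Rminus_eq_0, Rabs_R0; lra. Qed.

(* The [pdz u] terms cancel by [pdx_t_implicit] and [pdy_t_implicit]; what remains is
   the integral of the radial derivative of [u (., ., t x y z)] over the circle. *)
Lemma flux_integrals_cancel :
  RInt (fun th => (pdx u (x + d / 4 * cos th) (y + d / 4 * sin th) (t x y z)
         + pdz u (x + d / 4 * cos th) (y + d / 4 * sin th) (t x y z) * pdx t x y z) * cos th) 0 (2 * PI)
  + RInt (fun th => (pdy u (x + d / 4 * cos th) (y + d / 4 * sin th) (t x y z)
         + pdz u (x + d / 4 * cos th) (y + d / 4 * sin th) (t x y z) * pdy t x y z) * sin th) 0 (2 * PI)
  + (pdx u x y (t x y z) * RInt (fun th => pdz u (x + d / 4 * cos th) (y + d / 4 * sin th) (t x y z)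
         * pdz t x y z * cos th) 0 (2 * PI)
     + pdy u x y (t x y z) * RInt (fun th => pdz u (x + d / 4 * cos th) (y + d / 4 * sin th) (t x y z)
         * pdz t x y z * sin th) 0 (2 * PI)) = 0.
Proof.
  pose proof (center_in_box x y near_x near_y) as Hxy.
  pose proof (t_in_J x y z Hxy Hz) as HJ.
  assert (C : forall th, continuous (uncurry3 (pdx u)) (x + d / 4 * cos th, y + d / 4 * sin th, t x y z) /\
    continuous (uncurry3 (pdy u)) (x + d / 4 * cos th, y + d / 4 * sin th, t x y z) /\
    continuous (uncurry3 (pdz u)) (x + d / 4 * cos th, y + d / 4 * sin th, t x y z))
    by (intros th; destruct (continuous_u_C1 _ _ _ (circle_in_box x y th near_x near_y) HJ)
          as (_&?&?&?); auto).
  rewrite <- (RInt_Rmult_l _ (pdx u x y (t x y z))), <- (RInt_Rmult_l _ (pdy u x y (t x y z))),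
    <- !RInt_Rplus; try (intros th; destruct (C th) as (?&?&?); continuity_C1).
  rewrite (RInt_Rext _ (g_r x y (fun a b => u a b (t x y z)) (d / 4))).
  - apply (radial_mean_vanishes x y U _ (d / 2) U_open (u_harmonic _ HJ)
             (fun s th => disk_in_box x y s th near_x near_y)); lra.
  - intros th.
    change (g_r x y _ (d / 4) th) with
      (cos th * pdx u (x + d / 4 * cos th) (y + d / 4 * sin th) (t x y z)
       + sin th * pdy u (x + d / 4 * cos th) (y + d / 4 * sin th) (t x y z)).
    transitivity (cos th * pdx u (x + d / 4 * cos th) (y + d / 4 * sin th) (t x y z)
                  + sin th * pdy u (x + d / 4 * cos th) (y + d / 4 * sin th) (t x y z)
                  + pdz u (x + d / 4 * cos th) (y + d / 4 * sin th) (t x y z)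
                    * (cos th * (pdx t x y z + pdx u x y (t x y z) * pdz t x y z)
                       + sin th * (pdy t x y z + pdy u x y (t x y z) * pdz t x y z))); [ring |].
    rewrite pdx_t_implicit, pdy_t_implicit by assumption; ring.
Qed.

Lemma divergence_free_at :
  ex_derive (fun x' => 2 * pdx u x' y (t x' y z)) x /\
  ex_derive (fun y' => 2 * pdy u x y' (t x y' z)) y /\
  ex_derive (fun z' => pdx u x y (t x y z') ^ 2 + pdy u x y (t x y z') ^ 2) z /\
  Derive (fun x' => 2 * pdx u x' y (t x' y z)) x + Derive (fun y' => 2 * pdy u x y' (t x y' z)) y
  + Derive (fun z' => pdx u x y (t x y z') ^ 2 + pdy u x y (t x y z') ^ 2) z = 0.
Proof.
  assert (He : 0 < d / 2) by lra.
  assert (Cc : forall th, continuous cos th) by (intros; continuity_R).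
  assert (Cs : forall th, continuous sin th) by (intros; continuity_R).
  pose proof (is_derive_circle_repr_x _ _ _ _ _ Hz He center_in_box circle_in_box _ _ Cc pdx_u_circle)
    as DP.
  pose proof (is_derive_circle_repr_y _ _ _ _ _ Hz He center_in_box circle_in_box _ _ Cs pdy_u_circle)
    as DQ.
  pose proof (is_derive_circle_repr_z _ _ _ _ _ Hz He center_in_box circle_in_box _ _ Cc pdx_u_circle)
    as DA.
  pose proof (is_derive_circle_repr_z _ _ _ _ _ Hz He center_in_box circle_in_box _ _ Cs pdy_u_circle)
    as DB.
  apply (is_derive_Rmult_l _ 2) in DP, DQ.
  pose proof (is_derive_Rplus _ _ _ _ _ (is_derive_pow _ 2 _ _ DA) (is_derive_pow _ 2 _ _ DB)) as DS.
  repeat split; [eexists; eassumption .. |].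
  rewrite (is_derive_unique (fun x' : R => 2 * pdx u x' y (t x' y z)) x _ DP),
    (is_derive_unique (fun y' : R => 2 * pdy u x y' (t x y' z)) y _ DQ),
    (is_derive_unique (fun z' : R => pdx u x y (t x y z') ^ 2 + pdy u x y (t x y z') ^ 2) z _ DS).
  cbn [INR Init.Nat.pred].
  assert (F := flux_integrals_cancel).
  match type of F with ?L = 0 => transitivity (2 * / (PI * (d / 4)) * L) end; [ring | rewrite F; ring].
Qed.

End AtPoint.

End Divergence.

Theorem lemma3p1
  (U : R -> R -> Prop) (aI bI aJ bJ : Rbar)
  (u : R -> R -> R -> R) (t : R -> R -> R -> R) :
  open2 U ->
  (* u : U x J -> I *)
  (forall x y s, U x y -> open_ivl aJ bJ s -> open_ivl aI bI (u x y s)) ->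
  C1_on3 u (fun x y s => U x y /\ open_ivl aJ bJ s) ->
  (forall s, open_ivl aJ bJ s -> harmonic_on (fun x y => u x y s) U) ->
  (* t : U x I -> J, C^1, with u(x,y;t(x,y;z)) = z *)
  (forall x y z, U x y -> open_ivl aI bI z -> open_ivl aJ bJ (t x y z)) ->
  C1_on3 t (fun x y z => U x y /\ open_ivl aI bI z) ->
  (forall x y z, U x y -> open_ivl aI bI z -> u x y (t x y z) = z) ->
  divergence_free_on
    (fun x y z => 2 * pdx u x y (t x y z))
    (fun x y z => 2 * pdy u x y (t x y z))
    (fun x y z => (pdx u x y (t x y z)) ^ 2 + (pdy u x y (t x y z)) ^ 2)
    (fun x y z => U x y /\ open_ivl aI bI z).
Proof.
  (* That [u] takes its values in [I] is not needed. *)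
  intros U_open _ u_C1 u_harmonic t_in_J t_C1 u_t_inverse x y z [Hxy Hz].
  destruct (proj2 (locally_2d_locally U x y) (U_open (x, y) Hxy)) as [d box_in_U].
  exact (divergence_free_at U aI bI aJ bJ u t U_open u_C1 t_C1 t_in_J u_t_inverse u_harmonic
           x y z d Hz (cond_pos d) box_in_U).
Qed.
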